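(* Let $G$ be a finite group with $c(G)$ conjugacy classes, and let $\pi\in S_4$ be a non-identity permutation with $\pi(1)=1$ or $\pi(4)=4$. Then $Pr_\pi(G)=\frac{c(G)}{|G|}$.
   Context: For $\pi\in S_n$ written in one-line notation $\langle\pi_1\dots\pi_n\rangle$, $Pr_\pi(G)$ is the probability that $a_1a_2\cdots a_n=a_{\pi_1}a_{\pi_2}\cdots a_{\pi_n}$ when $a_1,\dots,a_n$ are independent uniformly random elements of the finite group $G$. $c(G)$ is the number of conjugacy classes of $G$. *)

From mathcomp Require Import all_boot all_order all_algebra all_fingroup.
Set Implicit Arguments. Unset Strict Implicit. Unset Printing Implicit Defensive.
Import GRing.Theory Num.Theory.

(* Pr_pi(G): probability that a_1 ... a_n = a_{pi 1} ... a_{pi n}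
   for a_1..a_n independent uniform in G.  Indices 1..n are 'I_n = {0..n-1}. *)
Definition Pr_perm (gT : finGroupType) (G : {group gT}) (n : nat) (p : 'S_n) : rat :=
  (#|[set a : {ffun 'I_n -> gT} |
        [forall i, a i \in G] &&
        ((\prod_(i < n) a i)%g == (\prod_(i < n) a (p i))%g)]|%:R
   / (#|G| ^ n)%:R)%R.

Definition nclasses (gT : finGroupType) (G : {group gT}) : nat := #|classes G|.

From mathcomp Require Import all_boot all_order all_algebra all_fingroup ring.

(* Burnside's lemma for the conjugation action shows that G has exactly
   |G| c(G) commuting pairs.  For every non-identity permutation of three
   letters, a change of variables by left or right translations turns the
   equation abc = a_{s1} a_{s2} a_{s3} into a single commutation relation
   with one free variable, so the number of solutions is |G|^2 c(G).  A
   permutation of four letters fixing the first or the last one reduces to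
   this case after cancelling the fixed factor, giving |G|^3 c(G) solutions
   out of |G|^4. *)

Import GRing.Theory Num.Theory.

Set Implicit Arguments.
Unset Strict Implicit.

Section Counting.
Variables (gT : finGroupType) (G : {group gT}).
Local Open Scope group_scope.

Definition ncommuting_pairs : nat :=
  \sum_(x in G) \sum_(y in G) ((x * y)%g == (y * x)%g : nat).

Lemma ncommuting_pairsE : ncommuting_pairs = (#|G| * nclasses G)%N.
Proof.
have actsJ : [acts G, on G | 'J] by rewrite astabsJ normG.
have := Frobenius_Cauchy actsJ.
have -> : [set orbit 'J G x | x in G] = classes G.
  by apply: eq_imset => x; apply: orbitJ.
rewrite /nclasses mulnC => <-; apply: eq_bigr => a _.
rewrite -sum1_card [RHS]big_mkcond [LHS]big_mkcond /=.
apply: eq_bigr => x _; rewrite /afix !inE.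
case: (x \in G) => //=.
by rewrite sub1set inE /= (conjgC x a) (inj_eq (mulgI a)) eq_sym; case: eqP.
Qed.

Lemma reindex_mulgl b (F : gT -> nat) : b \in G ->
  (\sum_(x in G) F x = \sum_(x in G) F (b * x)%g)%N.
Proof.
by move=> bG; rewrite (reindex_inj (mulgI b)); apply: eq_bigl => x; rewrite /= groupMl.
Qed.

Lemma reindex_mulgr b (F : gT -> nat) : b \in G ->
  (\sum_(x in G) F x = \sum_(x in G) F (x * b)%g)%N.
Proof.
by move=> bG; rewrite (reindex_inj (mulIg b)); apply: eq_bigl => x; rewrite /= groupMr.
Qed.

Definition count3 (Q : gT -> gT -> gT -> bool) : nat :=
  \sum_(a in G) \sum_(b in G) \sum_(c in G) (Q a b c : nat).

Definition count4 (P : gT -> gT -> gT -> gT -> bool) : nat :=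
  \sum_(x in G) \sum_(y in G) \sum_(z in G) \sum_(w in G) (P x y z w : nat).

Lemma eq_count4 P P' : (forall x y z w, P x y z w = P' x y z w) ->
  count4 P = count4 P'.
Proof.
move=> eqP'; apply: eq_bigr => x _; apply: eq_bigr => y _.
by apply: eq_bigr => z _; apply: eq_bigr => w _; rewrite eqP'.
Qed.

Lemma count3_swap12 :
  count3 (fun a b c => a * b * c == b * a * c) = (#|G| * ncommuting_pairs)%N.
Proof.
rewrite big_distrr; apply: eq_bigr => a _.
rewrite big_distrr; apply: eq_bigr => b _.
under eq_bigr do rewrite (inj_eq (mulIg _)).
by rewrite sum_nat_const.
Qed.

Lemma count3_swap23 :
  count3 (fun a b c => a * b * c == a * c * b) = (#|G| * ncommuting_pairs)%N.
Proof.
rewrite -sum_nat_const; apply: eq_bigr => a _.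
apply: eq_bigr => b _; apply: eq_bigr => c _.
by rewrite -!mulgA (inj_eq (mulgI _)).
Qed.

(* Substituting a = a' b^-1 and c = c' b^-1 reduces abc = cba to a'c' = c'a'. *)
Lemma count3_swap13 :
  count3 (fun a b c => a * b * c == c * b * a) = (#|G| * ncommuting_pairs)%N.
Proof.
rewrite /count3 -sum_nat_const exchange_big /=; apply: eq_bigr => b bG.
rewrite [LHS](reindex_mulgr _ (groupVr bG)); apply: eq_bigr => a _.
rewrite [LHS](reindex_mulgr _ (groupVr bG)); apply: eq_bigr => c _.
by rewrite mulgKV !mulgA mulgKV (inj_eq (mulIg _)).
Qed.

(* Substituting c = b^-1 c' reduces abc = bca to ac' = c'a. *)
Lemma count3_rot :
  count3 (fun a b c => a * b * c == b * c * a) = (#|G| * ncommuting_pairs)%N.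
Proof.
rewrite big_distrr; apply: eq_bigr => a _.
rewrite -[RHS]sum_nat_const; apply: eq_bigr => b bG.
rewrite [LHS](reindex_mulgl _ (groupVr bG)); apply: eq_bigr => c _.
by rewrite -(mulgA a b) mulKVg.
Qed.

(* Substituting b = a^-1 b' reduces abc = cab to b'c = cb'. *)
Lemma count3_rotV :
  count3 (fun a b c => a * b * c == c * a * b) = (#|G| * ncommuting_pairs)%N.
Proof.
rewrite -sum_nat_const; apply: eq_bigr => a aG.
rewrite [LHS](reindex_mulgl _ (groupVr aG)).
apply: eq_bigr => b _; apply: eq_bigr => c _.
by rewrite -(mulgA c) mulKVg.
Qed.

Definition sel3 (a b c : gT) (n : nat) : gT :=
  match n with 0 => a | 1 => b | _ => c end.

Definition sel4 (x y z w : gT) (n : nat) : gT :=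
  match n with 0 => x | 1 => y | 2 => z | _ => w end.

(* [count3_perm n0 n1 n2] counts the solutions for the permutation whose
   one-line notation, indexed from 0, is [n0 n1 n2]; likewise [count4_perm]. *)
Definition count3_perm (n0 n1 n2 : nat) : nat :=
  count3 (fun a b c => a * b * c == sel3 a b c n0 * sel3 a b c n1 * sel3 a b c n2).

Definition count4_perm (n0 n1 n2 n3 : nat) : nat :=
  count4 (fun x y z w => x * y * z * w ==
    sel4 x y z w n0 * sel4 x y z w n1 * sel4 x y z w n2 * sel4 x y z w n3).

Lemma count3_permE n0 n1 n2 :
  all (fun n => n < 3)%N [:: n0; n1; n2] -> uniq [:: n0; n1; n2] ->
  [:: n0; n1; n2] != [:: 0; 1; 2]%N ->
  count3_perm n0 n1 n2 = (#|G| * ncommuting_pairs)%N.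
Proof.
case: n0 => [|[|[|n0]]]; case: n1 => [|[|[|n1]]]; case: n2 => [|[|[|n2]]] //= _ _ _;
first [ exact: count3_swap12 | exact: count3_swap23 | exact: count3_swap13
      | exact: count3_rot | exact: count3_rotV ].
Qed.

Lemma count4_fix_first n1 n2 n3 :
  count4_perm 0 n1.+1 n2.+1 n3.+1 = (#|G| * count3_perm n1 n2 n3)%N.
Proof.
rewrite /count4_perm /count4 -sum_nat_const; apply: eq_bigr => x _.
apply: eq_bigr => y _; apply: eq_bigr => z _; apply: eq_bigr => w _.
by rewrite -!mulgA (inj_eq (mulgI _)) !mulgA.
Qed.

Lemma count4_fix_last n0 n1 n2 :
  all (fun n => n < 3)%N [:: n0; n1; n2] ->
  count4_perm n0 n1 n2 3 = (#|G| * count3_perm n0 n1 n2)%N.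
Proof.
have sel43 n : (n < 3)%N -> forall x y z w, sel4 x y z w n = sel3 x y z n.
  by case: n => [|[|[|]]].
move=> /and4P[/sel43 sel0 /sel43 sel1 /sel43 sel2 _].
rewrite /count4_perm /count4 /count3_perm /count3 big_distrr; apply: eq_bigr => x _.
rewrite big_distrr; apply: eq_bigr => y _.
rewrite big_distrr; apply: eq_bigr => z _.
under eq_bigr do rewrite sel0 sel1 sel2 (inj_eq (mulIg _)).
by rewrite sum_nat_const.
Qed.

Lemma count4_permE n0 n1 n2 n3 :
  all (fun n => n < 4)%N [:: n0; n1; n2; n3] -> uniq [:: n0; n1; n2; n3] ->
  (n0 == 0%N) || (n3 == 3%N) -> [:: n0; n1; n2; n3] != [:: 0; 1; 2; 3]%N ->
  count4_perm n0 n1 n2 n3 = (#|G| * (#|G| * ncommuting_pairs))%N.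
Proof.
case: n0 => [|[|[|[|n0]]]]; case: n1 => [|[|[|[|n1]]]];
case: n2 => [|[|[|[|n2]]]]; case: n3 => [|[|[|[|n3]]]] //= _ _ _ _;
by rewrite ?count4_fix_first ?count4_fix_last // count3_permE.
Qed.

Lemma prod_ord4 (f : 'I_4 -> gT) :
  \prod_(i < 4) f i = f (inord 0) * f (inord 1) * f (inord 2) * f (inord 3).
Proof.
rewrite !big_ord_recl big_ord0 mulg1 !mulgA.
by congr (f _ * f _ * f _ * f _); apply: val_inj; rewrite /= inordK.
Qed.

Lemma card_ffun4_in (Q : {ffun 'I_4 -> gT} -> bool) :
  #|[set a : {ffun 'I_4 -> gT} | [forall i, a i \in G] && Q a]| =
  count4 (fun x y z w => Q [ffun i : 'I_4 => sel4 x y z w i]).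
Proof.
rewrite -sum1_card big_mkcond /=.
pose mk (t : gT * gT * gT * gT) := [ffun i : 'I_4 => sel4 t.1.1.1 t.1.1.2 t.1.2 t.2 i].
rewrite (reindex mk) /=; last first.
  apply: onW_bij; exists (fun a : {ffun 'I_4 -> gT} => (a (inord 0), a (inord 1), a (inord 2), a (inord 3))).
    by case=> [[[x y] z] w]; rewrite !ffunE /= !inordK.
  move=> a; apply/ffunP => i; rewrite ffunE.
  by case: i => [[|[|[|[|//]]]] i_lt4] /=; congr (a _); apply: val_inj; rewrite /= inordK.
rewrite /count4 !pair_big /= [RHS]big_mkcond /=.
apply: eq_bigr => [[[[x y] z] w]] _; rewrite inE /=.
have -> : [forall i, mk (x, y, z, w) i \in G] = [&& x \in G, y \in G, z \in G & w \in G].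
  apply/forallP/and4P => [inG | [xG yG zG wG] i]; last first.
    by rewrite ffunE; case: i => [[|[|[|[|//]]]] ?].
  by move: (inG (inord 0)) (inG (inord 1)) (inG (inord 2)) (inG (inord 3)); rewrite !ffunE /= !inordK.
by case: (x \in G); case: (y \in G); case: (z \in G); case: (w \in G).
Qed.

Lemma card_perm4_solutions (p : 'S_4) :
  p != 1 -> (p ord0 = ord0 \/ p ord_max = ord_max) ->
  #|[set a : {ffun 'I_4 -> gT} | [forall i, a i \in G] &&
      (\prod_(i < 4) a i == \prod_(i < 4) a (p i))]| =
  (#|G| * (#|G| * ncommuting_pairs))%N.
Proof.
move=> p_neq1 p_fixes_end.
pose n k := val (p (inord k)).
have p_ne i j : i != j -> val (p i) != val (p j).
  by apply: contra => /eqP/val_inj/perm_inj ->.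
rewrite card_ffun4_in; transitivity (count4_perm (n 0) (n 1) (n 2) (n 3))%N.
  by apply: eq_count4 => x y z w; rewrite !prod_ord4 !ffunE !inordK.
apply: count4_permE.
- by rewrite /= !ltn_ord.
- by rewrite /= !inE !negb_or !p_ne //; apply/eqP => /(congr1 val); rewrite /= !inordK.
- rewrite /n; have [-> ->] : inord 0 = ord0 :> 'I_4 /\ inord 3 = ord_max :> 'I_4.
    by split; apply: val_inj; rewrite /= inordK.
  by case: p_fixes_end => ->; rewrite eqxx ?orbT.
- apply: contra p_neq1 => /eqP n_id; apply/eqP/permP => i; apply: val_inj.
  rewrite perm1 -[i]inord_val; case: i => [[|[|[|[|//]]]] ?];
  by rewrite /= inordK //; case: n_id.
Qed.

End Counting.

Theorem mainTheorem6 (gT : finGroupType) (G : {group gT}) (p : 'S_4) :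
  p != 1%g ->
  (p ord0 = ord0 \/ p ord_max = ord_max) ->
  Pr_perm G p = ((nclasses G)%:R / #|G|%:R)%R.
Proof.
move=> p_neq1 p_fixes_end.
rewrite /Pr_perm card_perm4_solutions // ncommuting_pairsE.
have G_neq0 : (#|G|%:R : rat) != 0%R by rewrite pnatr_eq0 -lt0n cardG_gt0.
by rewrite !natrM; field.
Qed.
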